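(* Let $S\subset\mathbb Z_{\ge1}$. Then $\langle S\rangle_{\mathcal C^w}$ is the union of $S+(\mathcal S_\Gamma\cup\{0\})$ and the set of all integers of the form $k+\overline\beta_b-\overline\beta_a+s$ with $k\in S$, $s\in\mathcal S_\Gamma\cup\{0\}$, $1\le a<b\le g$, $k\le\overline\beta_a$ and $k\equiv\beta_a\pmod{e_{a-1}}$.
   Context: Let $\Gamma$ be a singular irreducible plane branch with multiplicity $n$, Puiseux characteristic exponents $\beta_1<\dots<\beta_g$, $e_0=n$, $e_j=\gcd(e_{j-1},\beta_j)$, $n_j=e_{j-1}/e_j$, $\overline\beta_1=\beta_1$, $\overline\beta_j=n_{j-1}\overline\beta_{j-1}-\beta_{j-1}+\beta_j$ ($2\le j\le g$), and semigroup $\mathcal S_\Gamma$ generated by $n,\overline\beta_1,\dots,\overline\beta_g$. A subset $S\subset\mathbb Z_{>0}$ is a $\mathcal C^w$-collection if $S+\mathcal S_\Gamma\subset S$ and for every $1\le l<g$ and $\lambda\in S$ with $\lambda\le\overline\beta_l$ and $\lambda\equiv\beta_l\pmod{e_{l-1}}$ one has $\lambda+\overline\beta_{l+1}-\overline\beta_l\in S$. $\langle S\rangle_{\mathcal C^w}$ is the smallest $\mathcal C^w$-collection containing $S$. *)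

From mathcomp Require Import all_boot.
Set Implicit Arguments. Unset Strict Implicit. Unset Printing Implicit Defensive.

(* Puiseux data of a plane branch: multiplicity n, genus g and characteristic
   exponents beta 1 < ... < beta g (values of beta outside 1..g are irrelevant). *)

Fixpoint e_ (n : nat) (beta : nat -> nat) (j : nat) : nat :=
  match j with
  | 0 => n
  | j'.+1 => gcdn (e_ n beta j') (beta j'.+1)
  end.

Definition n_ (n : nat) (beta : nat -> nat) (j : nat) : nat :=
  e_ n beta j.-1 %/ e_ n beta j.

(* bbar_0 = n (convention), bbar_1 = beta_1,
   bbar_j = n_{j-1} bbar_{j-1} - beta_{j-1} + beta_j  for j >= 2.
   (The natural-number subtraction is exact: n_{j-1} bbar_{j-1} >= beta_{j-1}.) *)
Fixpoint bbar (n : nat) (beta : nat -> nat) (j : nat) : nat :=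
  match j with
  | 0 => n
  | j'.+1 =>
      match j' with
      | 0 => beta 1
      | _.+1 => (n_ n beta j' * bbar n beta j' + beta j) - beta j'
      end
  end.

Definition char_data (n g : nat) (beta : nat -> nat) : Prop :=
  [/\ 1 <= g,
      n < beta 1,
      (forall j, 1 <= j < g -> beta j < beta j.+1),
      (forall j, 1 <= j <= g -> e_ n beta j < e_ n beta j.-1) &
      e_ n beta g = 1].

Definition in_semigroup (n g : nat) (beta : nat -> nat) (m : nat) : Prop :=
  exists c : nat -> nat, m = \sum_(0 <= j < g.+1) c j * bbar n beta j.

Definition Cw_collection (n g : nat) (beta : nat -> nat) (T : nat -> Prop) : Prop :=
  [/\ (forall x, T x -> 0 < x),
      (forall x s, T x -> in_semigroup n g beta s -> T (x + s)) &
      (forall l lam, 1 <= l < g -> T lam -> lam <= bbar n beta l ->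
         lam = beta l %[mod e_ n beta l.-1] ->
         T (lam + bbar n beta l.+1 - bbar n beta l))].

Definition Cw_gen (n g : nat) (beta : nat -> nat) (S : nat -> Prop) (x : nat) : Prop :=
  forall T : nat -> Prop, Cw_collection n g beta T -> (forall y, S y -> T y) -> T x.

(* An element of the explicit set is admissible at level l (i.e. at most bbar_l and
   congruent to beta_l mod e_{l-1}) only in two ways.  If it is k + s with s in the
   semigroup, then s < bbar_l forces e_{l-1} | s (generators bbar_j with j >= l are
   too large to occur), so k itself is admissible at l.  If it is
   k + bbar_b - bbar_a + s, then l = b: for l < b it exceeds bbar_l because
   bbar_{j+1} > 2 bbar_j, and for l > b it is divisible by e_{l-1}, which does not
   divide beta_l.  In both cases the C^w-rule lands back in the explicit set, so the
   set is a C^w-collection.  Conversely, iterating the rule from an admissible k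
   yields k + bbar_b - bbar_a, admissible at every level b > a, so any
   C^w-collection containing S contains the explicit set. *)
From mathcomp Require Import all_boot zify.
Set Implicit Arguments. Unset Strict Implicit. Unset Printing Implicit Defensive.

Lemma modnD_dvdl d m x : d %| m -> m + x = x %[mod d].
Proof. by move=> /eqP dm; rewrite -modnDml dm. Qed.

Definition admissible n beta l lam : Prop :=
  lam <= bbar n beta l /\ lam = beta l %[mod e_ n beta l.-1].

Section Divisibility.
Variables (n : nat) (beta : nat -> nat).
Local Notation e := (e_ n beta).
Local Notation bb := (bbar n beta).

Lemma dvdn_e_leq i j : i <= j -> e j %| e i.
Proof.
move=> /subnK <-; elim: (j - i) => [|m IH] //=.
exact: dvdn_trans (dvdn_gcdl _ _) IH.
Qed.

Lemma dvdn_e_beta j : 0 < j -> e j %| beta j.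
Proof. by case: j => //= j _; apply: dvdn_gcdr. Qed.

Lemma bbarS j : 0 < j -> bb j.+1 = n_ n beta j * bb j + beta j.+1 - beta j.
Proof. by case: j. Qed.

Lemma dvdn_e_bbar j : e j %| bb j.
Proof.
elim: j => [|[|j] IH] //; first exact: dvdn_gcdr.
have eS := dvdn_e_leq (leqnSn j.+1).
rewrite bbarS //; apply: dvdn_sub; first apply: dvdn_add.
- exact/dvdn_mull/(dvdn_trans eS).
- exact: dvdn_e_beta.
- exact: dvdn_trans eS (dvdn_e_beta _).
Qed.

Lemma dvdn_e_bbar_leq i j : i <= j -> e j %| bb i.
Proof. by move/dvdn_e_leq/dvdn_trans; apply; apply: dvdn_e_bbar. Qed.

Lemma dvdn_e_beta_leq i j : 0 < i -> i <= j -> e j %| beta i.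
Proof. by move=> i_gt0 /dvdn_e_leq/dvdn_trans; apply; apply: dvdn_e_beta. Qed.

Lemma dvdn_e_admissible a l k : 0 < a < l -> admissible n beta a k -> e l.-1 %| k.
Proof.
case/andP=> a_gt0 lt_al [_ k_cong].
have dvd_e : e l.-1 %| e a.-1 by apply: dvdn_e_leq; lia.
have dvd_beta : e l.-1 %| beta a by apply: dvdn_e_beta_leq => //; lia.
by rewrite /dvdn -(modn_dvdm k dvd_e) k_cong modn_dvdm.
Qed.

End Divisibility.

Section Semigroup.
Variables (n g : nat) (beta : nat -> nat).

Lemma in_semigroup0 : in_semigroup n g beta 0.
Proof. by exists (fun=> 0); rewrite big1. Qed.

Lemma in_semigroup_or0 s : in_semigroup n g beta s \/ s = 0 -> in_semigroup n g beta s.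
Proof. by case=> [//|->]; apply: in_semigroup0. Qed.

Lemma in_semigroupD s t :
  in_semigroup n g beta s -> in_semigroup n g beta t -> in_semigroup n g beta (s + t).
Proof.
move=> [c ->] [d ->]; exists (fun j => c j + d j).
by rewrite -big_split; apply: eq_bigr => j _; rewrite mulnDl.
Qed.

End Semigroup.

Section Branch.
Variables (n g : nat) (beta : nat -> nat).
Hypothesis cd : char_data n g beta.
Local Notation e := (e_ n beta).
Local Notation bb := (bbar n beta).

Lemma e_pred_ndvd_beta l : 1 <= l <= g -> ~~ (e l.-1 %| beta l).
Proof.
case: l => [|l] // l_range; case: cd => _ _ _ /(_ _ l_range) /= lt_e _.
by apply: contraTN lt_e => /gcdn_idPl ->; rewrite ltnn.
Qed.

Lemma n_gt1 l : 1 <= l <= g -> 1 < n_ n beta l.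
Proof.
case: cd => _ _ _ e_dec _ /e_dec lt_e.
have /divnK : e l %| e l.-1 by apply: dvdn_e_leq; apply: leq_pred.
rewrite /n_; move: lt_e; set q := _ %/ _; nia.
Qed.

Lemma bbar_rec l : 1 <= l < g -> bb l.+1 + beta l = n_ n beta l * bb l + beta l.+1.
Proof.
move=> l_range; case: (cd) => _ _ beta_inc _ _.
by have := beta_inc l l_range; rewrite bbarS //; case/andP: l_range; lia.
Qed.

Lemma bbar_double_lt l : 1 <= l < g -> 2 * bb l < bb l.+1.
Proof.
move=> l_range; have := bbar_rec l_range.
have : 1 < n_ n beta l by apply: n_gt1; lia.
by case: (cd) => _ _ beta_inc _ _; have := beta_inc l l_range; nia.
Qed.

Lemma bbar_ltS l : l < g -> bb l < bb l.+1.
Proof.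
case: l => [|l] lt_lg; first by case: cd => _ n_lt _ _ _.
by have := @bbar_double_lt l.+1 lt_lg; lia.
Qed.

Lemma ltn_bbar i j : i < j -> j <= g -> bb i < bb j.
Proof.
have mono : {in [pred i | i <= g] &, {homo bb : i j / i < j}}.
  apply: homo_ltn_in; first exact: ltn_trans.
    by move=> ? ? _; rewrite !inE => ? ? /andP[_ /ltnW/leq_trans]; apply.
  by move=> ? _; rewrite inE; apply: bbar_ltS.
move=> lt_ij le_jg; apply: mono; rewrite // inE.
exact: ltnW (leq_trans lt_ij le_jg).
Qed.

Lemma leq_bbar i j : i <= j -> j <= g -> bb i <= bb j.
Proof.
by rewrite leq_eqVlt => /orP[/eqP-> //|lt_ij le_jg]; apply/ltnW/ltn_bbar.
Qed.

Lemma bbar_add_lt a b : 1 <= a < b -> b <= g -> bb a + bb b.-1 < bb b.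
Proof.
case: b => [|b]; first by rewrite ltn0 andbF.
move=> a_range lt_bg; rewrite succnK.
have := @bbar_double_lt b; have := @leq_bbar a b; lia.
Qed.

Lemma dvdn_e_semigroup l s : 1 <= l <= g -> in_semigroup n g beta s -> s < bb l ->
  e l.-1 %| s.
Proof.
move=> l_range [c ->] lt_s; rewrite big_seq; apply: dvdn_sum => j.
rewrite mem_index_iota => /andP[_ lt_jg].
have [lt_jl|le_lj] := ltnP j l.
  by apply/dvdn_mull/dvdn_e_bbar_leq; rewrite -ltnS prednK //; case/andP: l_range.
have term_le : c j * bb j <= \sum_(0 <= i < g.+1) c i * bb i.
  by rewrite (bigD1_seq j) ?mem_index_iota ?iota_uniq //= leq_addr.
have := leq_bbar le_lj lt_jg; move: lt_s term_le; set sum := \sum_(_ <= _ < _) _.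
by case: (c j) => [|m]; [rewrite mul0n dvdn0 | nia].
Qed.

Lemma admissible_step l lam : 1 <= l < g -> admissible n beta l lam ->
  admissible n beta l.+1 (lam + bb l.+1 - bb l).
Proof.
move=> l_range [le_lam lam_cong]; have rec := bbar_rec l_range.
have lt_bb : bb l < bb l.+1 by apply: bbar_ltS; case/andP: l_range.
split; first by clear lam_cong; lia.
(* Adding bbar_l + beta_l to both sides turns the recursion for bbar_{l+1} into
   a congruence modulo e_l, which divides n_l * bbar_l and bbar_l. *)
apply/eqP; rewrite -(eqn_modDl (bb l + beta l)).
have -> : bb l + beta l + (lam + bb l.+1 - bb l) = n_ n beta l * bb l + (lam + beta l.+1).
  by clear lam_cong; lia.
rewrite -addnA succnK.
rewrite (modnD_dvdl _ (dvdn_mull _ (dvdn_e_bbar _ _ l))).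
rewrite (modnD_dvdl _ (dvdn_e_bbar _ _ l)) eqn_modDr.
have dvd_e : e l %| e l.-1 by apply: dvdn_e_leq; apply: leq_pred.
by rewrite -(modn_dvdm lam dvd_e) lam_cong modn_dvdm.
Qed.

Lemma Cw_chain T a k : Cw_collection n g beta T -> 1 <= a -> T k -> admissible n beta a k ->
  forall b, a <= b <= g -> T (k + bb b - bb a) /\ admissible n beta b (k + bb b - bb a).
Proof.
move=> [_ _ T_step] a_gt0 Tk adm_k; elim=> [|b IH] /andP[le_ab lt_bg].
  by move: (leq_trans a_gt0 le_ab).
rewrite leq_eqVlt ltnS in le_ab; case/orP: le_ab => [/eqP <-|le_ab].
  by rewrite addnK.
have [T_lam adm_lam] : T (k + bb b - bb a) /\ admissible n beta b (k + bb b - bb a).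
  by apply: IH; rewrite le_ab ltnW.
have -> : k + bb b.+1 - bb a = (k + bb b - bb a) + bb b.+1 - bb b.
  by have := leq_bbar le_ab (ltnW lt_bg); have := bbar_ltS lt_bg; lia.
have b_range : 1 <= b < g by rewrite lt_bg andbT (leq_trans a_gt0).
split; last exact: admissible_step.
by case: adm_lam => le_lam lam_cong; apply: T_step.
Qed.

Lemma admissible_addr l k s : 1 <= l <= g -> 0 < k -> in_semigroup n g beta s ->
  admissible n beta l (k + s) -> admissible n beta l k.
Proof.
move=> l_range k_gt0 s_sg [le_ks ks_cong].
have dvd_s : e l.-1 %| s by apply: dvdn_e_semigroup s_sg _; lia.
by split; [lia | rewrite -ks_cong addnC modnD_dvdl].
Qed.

Lemma admissible_translate_index a b l k s : 1 <= a < b -> b <= g -> l <= g ->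
  0 < k -> admissible n beta a k -> in_semigroup n g beta s ->
  admissible n beta l (k + bb b - bb a + s) -> l = b.
Proof.
move=> /[dup] ab_range /andP[a_gt0 lt_ab] le_bg le_lg k_gt0 adm_k s_sg [le_x x_cong].
have le_bb_ab := leq_bbar (ltnW lt_ab) le_bg.
case: (ltngtP l b) => [lt_lb | lt_bl | //].
  have le_l_b1 : l <= b.-1 by rewrite -ltnS prednK // (leq_trans a_gt0 (ltnW lt_ab)).
  have := bbar_add_lt ab_range le_bg.
  by have := leq_bbar le_l_b1 (leq_trans (leq_pred b) le_bg); clear x_cong; lia.
have l_gt0 : 0 < l := leq_ltn_trans (leq0n b) lt_bl.
have le_b_l1 : b <= l.-1 by rewrite -ltnS prednK.
have dvd_x : e l.-1 %| k + bb b - bb a + s.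
  apply: dvdn_add; first apply: dvdn_sub; first apply: dvdn_add.
  - by apply: (dvdn_e_admissible _ adm_k); rewrite a_gt0 (ltn_trans lt_ab lt_bl).
  - exact: dvdn_e_bbar_leq le_b_l1.
  - exact: dvdn_e_bbar_leq (leq_trans (ltnW lt_ab) le_b_l1).
  - by apply: dvdn_e_semigroup s_sg _; [rewrite l_gt0 | clear x_cong; lia].
have l_range : 1 <= l <= g by rewrite l_gt0.
by case/negP: (e_pred_ndvd_beta l_range); rewrite /dvdn -x_cong.
Qed.

End Branch.

Definition Cw_explicit n g beta (S : nat -> Prop) (x : nat) : Prop :=
  (exists k s, [/\ S k, in_semigroup n g beta s \/ s = 0 & x = k + s]) \/
  (exists k s a b,
     [/\ S k, in_semigroup n g beta s \/ s = 0,
         1 <= a < b /\ b <= g,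
         admissible n beta a k &
         x = k + bbar n beta b - bbar n beta a + s]).

Section Explicit.
Variables (n g : nat) (beta : nat -> nat) (S : nat -> Prop).
Hypotheses (cd : char_data n g beta) (S_pos : forall x, S x -> 0 < x).
Local Notation e := (e_ n beta).
Local Notation bb := (bbar n beta).

Lemma Cw_explicit_step l x : 1 <= l < g -> Cw_explicit n g beta S x ->
  admissible n beta l x -> Cw_explicit n g beta S (x + bb l.+1 - bb l).
Proof.
move=> /[dup] l_range /andP[l_gt0 lt_lg].
have lt_bb := bbar_ltS cd lt_lg.
case=> [[k [s [Sk s_sg ->]]] | [k [s [a [b [Sk s_sg ab_range adm_k ->]]]]]] adm_x.
  right; exists k, s, l, l.+1; split => //.
  - by rewrite l_gt0 ltnSn.
  - apply: (admissible_addr cd _ (S_pos Sk) (in_semigroup_or0 s_sg) adm_x).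
    by rewrite l_gt0 ltnW.
  - by clear adm_x; lia.
case: ab_range => /[dup] ab_range /andP[a_gt0 lt_ab] le_bg.
have eq_lb := admissible_translate_index cd ab_range le_bg (ltnW lt_lg) (S_pos Sk)
  adm_k (in_semigroup_or0 s_sg) adm_x.
subst b; right; exists k, s, a, l.+1; split => //.
  by rewrite a_gt0 ltnS ltnW.
by have := leq_bbar cd (ltnW lt_ab) le_bg; clear adm_x adm_k; lia.
Qed.

Lemma Cw_explicit_collection : Cw_collection n g beta (Cw_explicit n g beta S).
Proof.
split.
- move=> x [[k [s [Sk _ ->]]] | [k [s [a [b [Sk _ [/andP[_ lt_ab] le_bg] _ ->]]]]]];
    have := S_pos Sk; first lia.
  by have := leq_bbar cd (ltnW lt_ab) le_bg; lia.
- move=> x t [[k [s [Sk s_sg ->]]] | [k [s [a [b [Sk s_sg ab_range adm_k ->]]]]]] t_sg.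
  + left; exists k, (s + t); split => //; last by rewrite addnA.
    by left; apply: in_semigroupD (in_semigroup_or0 s_sg) t_sg.
  + right; exists k, (s + t), a, b; split => //; last by rewrite addnA.
    by left; apply: in_semigroupD (in_semigroup_or0 s_sg) t_sg.
- by move=> l lam l_range T_lam le_lam lam_cong; apply: Cw_explicit_step.
Qed.

Lemma Cw_explicit_sub T : Cw_collection n g beta T -> (forall y, S y -> T y) ->
  forall x, Cw_explicit n g beta S x -> T x.
Proof.
move=> T_coll S_T x; case: (T_coll) => _ T_add _.
case=> [[k [s [Sk s_sg ->]]] | [k [s [a [b [Sk s_sg [/andP[a_gt0 lt_ab] le_bg] adm_k ->]]]]]].
  exact: T_add (S_T _ Sk) (in_semigroup_or0 s_sg).
apply: T_add (in_semigroup_or0 s_sg).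
have b_range : a <= b <= g by rewrite ltnW.
by have [] := Cw_chain cd T_coll a_gt0 (S_T _ Sk) adm_k b_range.
Qed.

End Explicit.

Theorem mainTheorem7 (n g : nat) (beta : nat -> nat) (S : nat -> Prop) :
  char_data n g beta ->
  (forall x, S x -> 0 < x) ->
  forall x : nat,
    Cw_gen n g beta S x <->
    ((exists k s, [/\ S k, in_semigroup n g beta s \/ s = 0 & x = k + s]) \/
     (exists k s a b,
        [/\ S k, in_semigroup n g beta s \/ s = 0,
            1 <= a < b /\ b <= g,
            k <= bbar n beta a /\ k = beta a %[mod e_ n beta a.-1] &
            x = k + bbar n beta b - bbar n beta a + s])).
Proof.
move=> cd S_pos x; split.
  move=> gen_x; apply: (gen_x (Cw_explicit n g beta S)).
    exact: Cw_explicit_collection.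
  by move=> y Sy; left; exists y, 0; split => //; [right | rewrite addn0].
by move=> expl_x T T_coll S_T; apply: Cw_explicit_sub expl_x.
Qed.
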